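(* Let $\mathcal X=\mathcal X_1\times\cdots\times\mathcal X_b$, $\mathcal X_i=\mathbb R^{m_i\times n_i}$ with trace inner product and arbitrary norms $\|\cdot\|_{(i)}$ (dual norms $\|\cdot\|_{(i)\star}$). Let $f:\mathcal X\to\mathbb R$ be continuously differentiable with $f\ge f^\star$ for some $f^\star\in\mathbb R$. Let $\mathcal D$ be an arbitrary probability distribution on subsets of $[b]$, and assume there are constants $L^0_{i,S}\ge0$ ($S\in\operatorname{supp}(\mathcal D)$), with $L^0_{i,S}=0$ for $i\notin S$, such that for every $S\in\operatorname{supp}(\mathcal D)$, $X\in\mathcal X$ and $\Gamma\in\mathcal X$ with $\Gamma_i=0$ for $i\notin S$, $$f(X+\Gamma)-f(X)-\langle\nabla f(X),\Gamma\rangle\le\sum_{i\in S}\frac{L^0_{i,S}}2\|\Gamma_i\|_{(i)}^2.$$ From $X^0$, for $k=0,1,\dots$ draw $S^k\sim\mathcal D$ i.i.d., set $X_i^{k+1}=X_i^k-\gamma_i^k(\nabla_if(X^k))^\sharp$ for $i\in S^k$ and $X_i^{k+1}=X_i^k$ otherwise, with $\gamma_i^k=1/L^0_{i,S^k}$. Then for every $K\ge1$, $$\frac1K\sum_{k=0}^{K-1}\sum_{i=1}^b\frac{w_i}{\frac1b\sum_{j=1}^bw_j}\mathbb E\big[\|\nabla_if(X^k)\|_{(i)\star}^2\big]\le\frac{f(X^0)-f^\star}{K\left(\frac1b\sum_{j=1}^bw_j\right)},\qquad w_i:=\mathbb E\left[\frac{\mathbb 1\{i\in\hat S\}}{2L^0_{i,\hat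 S}}\right],$$ where $\hat S\sim\mathcal D$.
   Context: $\operatorname{supp}(\mathcal D)$ is the collection of subsets of $[b]$ with positive probability. For $G\in\mathcal X_i$, $G^\sharp$ is an element of $\arg\max_Z\{\langle G,Z\rangle-\frac12\|Z\|_{(i)}^2\}$. In $w_i$ the integrand is understood to be $0$ when $i\notin\hat S$. *)

From HB Require Import structures.
From mathcomp Require Import all_boot all_order all_algebra.
From mathcomp Require Import boolp classical_sets reals.
Set Implicit Arguments. Unset Strict Implicit. Unset Printing Implicit Defensive.
Import Order.TTheory GRing.Theory Num.Theory.
Local Open Scope ring_scope.
Local Open Scope classical_set_scope.

Definition blocks (R : Type) (b : nat) (m n : 'I_b -> nat) :=
  forall i : 'I_b, 'M[R]_(m i, n i).

Section Defs.
Variables (R : realType) (b : nat) (m n : 'I_b -> nat).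
Local Notation X := (blocks R m n).

Definition mip (p q : nat) (A B : 'M[R]_(p, q)) : R := \tr (A^T *m B).

Definition ipX (x y : X) : R := \sum_(i < b) mip (x i) (y i).

Definition addX (x y : X) : X := fun i => x i + y i.
Definition subX (x y : X) : X := fun i => x i - y i.

Definition euclX (x : X) : R := Num.sqrt (ipX x x).

Definition is_gradient (f : X -> R) (g : X -> X) : Prop :=
  forall x : X, forall eps : R, 0 < eps -> exists2 delta : R, 0 < delta &
    forall h : X, euclX h < delta ->
      `| f (addX x h) - f x - ipX (g x) h | <= eps * euclX h.

Definition continuousX (g : X -> X) : Prop :=
  forall x : X, forall eps : R, 0 < eps -> exists2 delta : R, 0 < delta &
    forall y : X, euclX (subX y x) < delta -> euclX (subX (g y) (g x)) < eps.

Definition C1_with_gradient (f : X -> R) (g : X -> X) : Prop :=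
  is_gradient f g /\ continuousX g.

End Defs.

Definition is_norm (R : realType) (p q : nat) (N : 'M[R]_(p, q) -> R) : Prop :=
  [/\ forall A, 0 <= N A,
      forall A, N A = 0 -> A = 0,
      forall (a : R) A, N (a *: A) = `|a| * N A
    & forall A B, N (A + B) <= N A + N B].

Definition dual_norm (R : realType) (p q : nat) (N : 'M[R]_(p, q) -> R)
  (G : 'M[R]_(p, q)) : R :=
  sup [set mip G Z | Z in [set Z | N Z <= 1]].

Definition is_sharp (R : realType) (p q : nat) (N : 'M[R]_(p, q) -> R)
  (G Gs : 'M[R]_(p, q)) : Prop :=
  forall Z, mip G Z - (N Z) ^+ 2 / 2 <= mip G Gs - (N Gs) ^+ 2 / 2.

Definition is_distr (R : realType) (b : nat) (P : {set 'I_b} -> R) : Prop :=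
  (forall S, 0 <= P S) /\ \sum_(S : {set 'I_b}) P S = 1.

Definition step (R : realType) (b : nat) (m n : 'I_b -> nat)
  (grad : blocks R m n -> blocks R m n)
  (sharp : forall i : 'I_b, 'M[R]_(m i, n i) -> 'M[R]_(m i, n i))
  (L0 : {set 'I_b} -> 'I_b -> R)
  (x : blocks R m n) (S : {set 'I_b}) : blocks R m n :=
  fun i => if i \in S then x i - (L0 S i)^-1 *: sharp i (grad x i) else x i.

Definition iterate (R : realType) (b : nat) (m n : 'I_b -> nat)
  (grad : blocks R m n -> blocks R m n)
  (sharp : forall i : 'I_b, 'M[R]_(m i, n i) -> 'M[R]_(m i, n i))
  (L0 : {set 'I_b} -> 'I_b -> R) (x0 : blocks R m n)
  (s : seq {set 'I_b}) : blocks R m n :=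
  foldl (step grad sharp L0) x0 s.

(* expectation of a function of the first k samples S^0..S^{k-1}, drawn
   i.i.d. from P *)
Definition expect_k (R : realType) (b : nat) (P : {set 'I_b} -> R) (k : nat)
  (phi : seq {set 'I_b} -> R) : R :=
  \sum_(s : k.-tuple {set 'I_b}) (\prod_(S <- s) P S) * phi s.

Definition weight (R : realType) (b : nat) (P : {set 'I_b} -> R)
  (L0 : {set 'I_b} -> 'I_b -> R) (i : 'I_b) : R :=
  \sum_(S : {set 'I_b}) P S * (if i \in S then (2 * L0 S i)^-1 else 0).

From HB Require Import structures.
From mathcomp Require Import all_boot all_order all_algebra.
From mathcomp Require Import boolp classical_sets reals.
From mathcomp Require Import ring lra.
Import Order.TTheory GRing.Theory Num.Theory.
Local Open Scope ring_scope.

(* For a sampled set S, the step Gamma_i = -(1/L_{i,S}) (grad_i f)^# turns the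
   smoothness bound into a blockwise descent: since <G, G^#> - ||G^#||^2/2 is at
   least ||G||_*^2 / 2, each block i in S lowers f by at least
   ||grad_i f||_*^2 / (2 L_{i,S}).  Averaging over S gives
   E f(X^{k+1}) + sum_i w_i E ||grad_i f(X^k)||_*^2 <= E f(X^k); the sum over
   k < K telescopes to at most f(X^0) - f*, and dividing by K (sum_j w_j / b)
   gives the claim. *)

Lemma mipZr (R : realType) p q (G A : 'M[R]_(p, q)) a :
  mip G (a *: A) = a * mip G A.
Proof. by rewrite /mip -scalemxAr mxtraceZ. Qed.

Lemma mip0r (R : realType) p q (G : 'M[R]_(p, q)) : mip G 0 = 0.
Proof. by rewrite -(scale0r 0) mipZr mul0r. Qed.

Section Sharp.
Context {R : realType} {p q : nat} {N : 'M[R]_(p, q) -> R} {G Gs : 'M[R]_(p, q)}.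
Hypotheses (hN : is_norm N) (hGs : is_sharp N G Gs).

Local Open Scope classical_set_scope.

Lemma is_norm0 : N 0 = 0.
Proof. by case: hN => _ _ NZ _; rewrite -(scale0r 0) NZ normr0 mul0r. Qed.

Local Notation sharp_value := (mip G Gs - N Gs ^+ 2 / 2).

Lemma sharp_value_ge0 : 0 <= sharp_value.
Proof. by have := hGs 0; rewrite mip0r is_norm0 expr0n /= mul0r subr0. Qed.

Lemma mip_le_sharp_value Z : N Z <= 1 -> mip G Z <= Num.sqrt (2 * sharp_value).
Proof.
have [N0 _ NZ _] := hN => Z_le1.
have [a_le0|a_gt0] := lerP (mip G Z) 0; first exact: le_trans a_le0 (sqrtr_ge0 _).
(* Test the maximality of [Gs] against the competitor [<G,Z> Z]. *)
have := hGs (mip G Z *: Z); rewrite mipZr NZ gtr0_norm // exprMn => competitor.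
have NZ2 : N Z ^+ 2 <= 1 by rewrite -(expr1n _ 2) lerXn2r ?nnegrE.
have sqr_le : mip G Z ^+ 2 * N Z ^+ 2 <= mip G Z ^+ 2 by rewrite ler_piMr ?sqr_ge0.
rewrite -(gtr0_norm a_gt0) -sqrtr_sqr ler_wsqrtr //.
by move: competitor; rewrite expr2; lra.
Qed.

Lemma dual_norm_sqr_le : dual_norm N G ^+ 2 <= 2 * sharp_value.
Proof.
have ne : [set mip G Z | Z in [set Z | N Z <= 1]] !=set0.
  by exists 0, 0; rewrite /= ?is_norm0 ?ler01 ?mip0r.
have ub : ubound [set mip G Z | Z in [set Z | N Z <= 1]] (Num.sqrt (2 * sharp_value)).
  by move=> _ [Z /= Z_le1 <-]; exact: mip_le_sharp_value.
have d0 : 0 <= dual_norm N G.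
  apply: (ub_le_sup (ex_intro _ _ ub)).
  by exists 0; rewrite /= ?is_norm0 ?ler01 ?mip0r.
rewrite -[2 * _]sqr_sqrtr ?mulr_ge0 ?sharp_value_ge0 //.
by rewrite lerXn2r ?nnegrE ?sqrtr_ge0 //; exact: ge_sup.
Qed.

(* For [L = 0] both sides vanish, as [0^-1 = 0]. *)
Lemma sharp_step_le (L : R) : 0 <= L ->
  mip G (- L^-1 *: Gs) + L / 2 * N (- L^-1 *: Gs) ^+ 2
    <= - ((2 * L)^-1 * dual_norm N G ^+ 2).
Proof.
have [_ _ NZ _] := hN; rewrite le0r => /orP[/eqP->|L_gt0].
  by rewrite invr0 mulr0 invr0 oppr0 !mul0r scale0r mip0r add0r oppr0.
have c0 : 0 <= L^-1 by rewrite invr_ge0 ltW.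
rewrite mipZr NZ normrN ger0_norm // exprMn.
have -> : L / 2 * (L^-1 ^+ 2 * N Gs ^+ 2) = L^-1 * (N Gs ^+ 2 / 2).
  by rewrite expr2; field; rewrite gt_eqF.
have := ler_wpM2l c0 dual_norm_sqr_le.
rewrite invfM; lra.
Qed.

End Sharp.

Section Expectation.
Context {R : realType} {b : nat} {P : {set 'I_b} -> R}.

Lemma expect_k0 phi : expect_k P 0 phi = phi [::].
Proof.
rewrite /expect_k (big_pred1 [tuple]) ?big_nil ?mul1r //.
by move=> t; rewrite /= (tuple0 t); apply/esym/eqP.
Qed.

Lemma expect_kS k phi :
  expect_k P k.+1 phi = \sum_S P S * expect_k P k (fun s => phi (S :: s)).
Proof.
pose cons_tuple (p : {set 'I_b} * k.-tuple {set 'I_b}) := [tuple of p.1 :: p.2].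
rewrite /expect_k (reindex cons_tuple) /=; last first.
  exists (fun t : k.+1.-tuple {set 'I_b} => (thead t, [tuple of behead t])).
    by move=> [S t] _; rewrite /= theadE; congr pair; apply: val_inj.
  by move=> t _; apply: val_inj; rewrite /= [in RHS](tuple_eta t).
rewrite -(pair_big xpredT xpredT
  (fun S (t : k.-tuple _) => (\prod_(S' <- S :: t) P S') * phi (S :: t))) /=.
apply: eq_bigr => S _; rewrite mulr_sumr.
by apply: eq_bigr => t _; rewrite big_cons mulrA.
Qed.

Lemma expect_k_sumr (I : finType) (c : I -> R) k (phi : I -> seq {set 'I_b} -> R) :
  expect_k P k (fun s => \sum_i c i * phi i s) = \sum_i c i * expect_k P k (phi i).
Proof.
rewrite /expect_k; under eq_bigr do rewrite mulr_sumr.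
rewrite exchange_big /=; apply: eq_bigr => i _.
by rewrite mulr_sumr; apply: eq_bigr => t _; rewrite mulrCA.
Qed.

Hypothesis hP : is_distr P.

Lemma expect_k_ge k {a : R} {phi : seq {set 'I_b} -> R} :
  (forall s, a <= phi s) -> a <= expect_k P k phi.
Proof.
elim: k phi => [|k IH] phi phi_ge; first by rewrite expect_k0.
have [P_ge0 P_sum1] := hP.
rewrite expect_kS -[a]mul1r -P_sum1 mulr_suml.
by apply: ler_sum => S _; apply: ler_wpM2l => //; exact: IH.
Qed.

Lemma expect_foldl_descent {T : Type} {tr : T -> {set 'I_b} -> T} {V g : T -> R} :
  (forall x, g x + \sum_S P S * V (tr x S) <= V x) ->
  forall K x, \sum_(k < K) expect_k P k (fun s => g (foldl tr x s))
    <= V x - expect_k P K (fun s => V (foldl tr x s)).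
Proof.
have [P_ge0 _] := hP.
move=> descent; elim=> [|K IH] x; first by rewrite big_ord0 expect_k0 subrr.
have tail_le : \sum_(k < K) expect_k P k.+1 (fun s => g (foldl tr x s))
    <= \sum_S P S * V (tr x S) - expect_k P K.+1 (fun s => V (foldl tr x s)).
  rewrite expect_kS -sumrB.
  under eq_bigr do rewrite expect_kS.
  rewrite exchange_big /=; apply: ler_sum => S _.
  by rewrite -mulr_sumr -mulrBr; apply: ler_wpM2l => //; exact: IH.
rewrite big_ord_recl expect_k0 /=.
by have := descent x; lra.
Qed.

End Expectation.

Section Descent.
Context {R : realType} {b : nat} {m n : 'I_b -> nat}.
Context {norm : forall i : 'I_b, 'M[R]_(m i, n i) -> R} {f : blocks R m n -> R}.
Context {grad : blocks R m n -> blocks R m n} {P : {set 'I_b} -> R}.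
Context {L0 : {set 'I_b} -> 'I_b -> R}.
Context {sharp : forall i : 'I_b, 'M[R]_(m i, n i) -> 'M[R]_(m i, n i)}.
Hypothesis hnorm : forall i, is_norm (norm i).
Hypothesis hsharp : forall i G, is_sharp (norm i) G (sharp i G).
Hypothesis hP : is_distr P.
Hypothesis hL0nn : forall S i, 0 < P S -> 0 <= L0 S i.
Hypothesis hsmooth : forall S, 0 < P S -> forall x gam : blocks R m n,
  (forall i, i \notin S -> gam i = 0) ->
  f (addX x gam) - f x - ipX (grad x) gam
    <= \sum_(i in S) L0 S i / 2 * (norm i (gam i)) ^+ 2.

Definition block_gain (S : {set 'I_b}) (i : 'I_b) : R :=
  if i \in S then (2 * L0 S i)^-1 else 0.

Local Notation dual_sqr x i := (dual_norm (norm i) (grad x i) ^+ 2).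

Lemma weight_ge0 i : 0 <= weight P L0 i.
Proof.
have [P_ge0 _] := hP; apply: sumr_ge0 => S _.
have [PS0|PS_gt0] := eqVneq (P S) 0; first by rewrite PS0 mul0r.
rewrite mulr_ge0 //; case: ifP => // _.
by rewrite invr_ge0 mulr_ge0 // hL0nn // lt_def PS_gt0 P_ge0.
Qed.

Lemma step_descent S x : 0 < P S ->
  \sum_i block_gain S i * dual_sqr x i + f (step grad sharp L0 x S) <= f x.
Proof.
move=> PS_gt0.
pose gam : blocks R m n := fun i =>
  if i \in S then - (L0 S i)^-1 *: sharp i (grad x i) else 0.
have -> : step grad sharp L0 x S = addX x gam.
  apply: functional_extensionality_dep => i; rewrite /step /addX /gam.
  by case: ifP; rewrite ?addr0 // scaleNr.
have gam_out i : i \notin S -> gam i = 0 by rewrite /gam => /negbTE->.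
have block_le i : mip (grad x i) (gam i)
    + (if i \in S then L0 S i / 2 * norm i (gam i) ^+ 2 else 0)
    <= - (block_gain S i * dual_sqr x i).
  rewrite /gam /block_gain; case: ifP => _; last first.
    by rewrite mip0r !mul0r addr0 oppr0.
  exact: sharp_step_le (hnorm i) (hsharp i _) _ (hL0nn S i PS_gt0).
have := ler_sum (index_enum 'I_b) (fun i (_ : true) => block_le i).
rewrite big_split sumrN /= -big_mkcond.
have := hsmooth S PS_gt0 x gam gam_out; rewrite /ipX; lra.
Qed.

Lemma expected_step_descent x :
  \sum_i weight P L0 i * dual_sqr x i + \sum_S P S * f (step grad sharp L0 x S)
    <= f x.
Proof.
have [P_ge0 P_sum1] := hP.
have -> : \sum_i weight P L0 i * dual_sqr x i
    = \sum_S P S * \sum_i block_gain S i * dual_sqr x i.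
  under eq_bigr do rewrite mulr_suml.
  rewrite exchange_big; apply: eq_bigr => S _ /=.
  by rewrite mulr_sumr; apply: eq_bigr => i _; rewrite mulrA.
rewrite -big_split /= -[leRHS]mul1r -P_sum1 mulr_suml.
apply: ler_sum => S _; rewrite -mulrDr.
have [PS0|PS_neq0] := eqVneq (P S) 0; first by rewrite PS0 !mul0r.
apply: ler_wpM2l; first exact: P_ge0.
by apply: step_descent; rewrite lt_def PS_neq0 P_ge0.
Qed.

End Descent.

Theorem theorem5 (R : realType) (b : nat) (hb : (0 < b)%N) (m n : 'I_b -> nat)
  (norm : forall i : 'I_b, 'M[R]_(m i, n i) -> R)
  (hnorm : forall i, is_norm (norm i))
  (f : blocks R m n -> R) (grad : blocks R m n -> blocks R m n)
  (hf : C1_with_gradient f grad)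
  (fstar : R) (hfstar : forall x, fstar <= f x)
  (P : {set 'I_b} -> R) (hP : is_distr P)
  (L0 : {set 'I_b} -> 'I_b -> R)
  (hL0nn : forall S i, 0 < P S -> 0 <= L0 S i)
  (hL0out : forall S i, 0 < P S -> i \notin S -> L0 S i = 0)
  (hsmooth : forall S, 0 < P S -> forall x gam : blocks R m n,
     (forall i, i \notin S -> gam i = 0) ->
     f (addX x gam) - f x - ipX (grad x) gam
       <= \sum_(i in S) L0 S i / 2 * (norm i (gam i)) ^+ 2)
  (sharp : forall i : 'I_b, 'M[R]_(m i, n i) -> 'M[R]_(m i, n i))
  (hsharp : forall i G, is_sharp (norm i) G (sharp i G))
  (x0 : blocks R m n) (K : nat) (hK : (1 <= K)%N) :
  let w := weight P L0 in
  let avg := b%:R^-1 * \sum_(j < b) w j in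
  K%:R^-1 * \sum_(k < K) \sum_(i < b)
      (w i / avg) *
      expect_k P k (fun s => (dual_norm (norm i) (grad (iterate grad sharp L0 x0 s) i)) ^+ 2)
  <= (f x0 - fstar) / (K%:R * avg).
Proof.
cbv zeta; set w := weight P L0; set avg := b%:R^-1 * _.
set e := fun k i => expect_k P k
  (fun s => dual_norm (norm i) (grad (iterate grad sharp L0 x0 s) i) ^+ 2).
have total_descent : \sum_(k < K) \sum_i w i * e k i <= f x0 - fstar.
  have := expect_foldl_descent hP
    (expected_step_descent hnorm hsharp hP hL0nn hsmooth) K x0.
  under eq_bigr do rewrite expect_k_sumr.
  have := expect_k_ge hP K (fun s => hfstar (iterate grad sharp L0 x0 s)).
  rewrite /e /iterate; lra.
have avg_ge0 : 0 <= avg.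
  by rewrite mulr_ge0 ?invr_ge0 ?sumr_ge0 // => j _; exact: weight_ge0 hP hL0nn j.
have -> : K%:R^-1 * \sum_(k < K) \sum_i (w i / avg) * e k i
    = (K%:R * avg)^-1 * \sum_(k < K) \sum_i w i * e k i.
  rewrite [(K%:R * avg)^-1]invfM -mulrA; congr (_ * _).
  rewrite mulr_sumr; apply: eq_bigr => k _.
  by rewrite mulr_sumr; apply: eq_bigr => i _; rewrite mulrAC mulrC.
rewrite [leRHS]mulrC; apply: ler_wpM2l => //.
by rewrite invr_ge0 mulr_ge0.
Qed.
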